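(* Let $C$ be a small category and let $\xi_*:X\to Y$ be a morphism of $\Delta/C$ such that $\xi:[q_X]\to[q_Y]$ is surjective. Then its class $[\xi_*]:X\to Y$ is an isomorphism in $[\Delta/C]$.
   Context: For $q\ge0$, $[q]=\{0<\dots<q\}$ viewed as a category. A $q$-simplex of the nerve $NC$ is a functor $X:[q]\to C$; write $q_X=q$. The category $\Delta/C$ has as objects all simplices of $NC$ (all dimensions) and as morphisms $X\to Y$ the order-preserving maps $\xi:[q_X]\to[q_Y]$ with $Y\circ\xi=X$, written $\xi_*$. Given a $q$-simplex $X$ and a surjective order-preserving $s:[q+1]\to[q]$, let $d,d':[q]\to[q+1]$ be the two order-preserving right inverses of $s$; the morphisms $d_*,d'_*:X\to X\circ s$ are called elementary equivalent. $\sim$ is the smallest equivalence relation on morphisms of $\Delta/C$ (between the same source and target) that is compatible with composition and contains all elementary equivalent pairs; $[\Delta/C]$ is the quotient category with the same objects and morphisms the $\sim$-classes $[\xi_*]$. *)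

From mathcomp Require Import all_boot.
Set Implicit Arguments. Unset Strict Implicit. Unset Printing Implicit Defensive.

Record category := Category {
  Ob : Type;
  Hom : Ob -> Ob -> Type;
  cid : forall a, Hom a a;
  ccomp : forall a b c, Hom b c -> Hom a b -> Hom a c;
  ccomp_id_l : forall a b (f : Hom a b), ccomp (cid b) f = f;
  ccomp_id_r : forall a b (f : Hom a b), ccomp f (cid a) = f;
  ccomp_assoc : forall a b c d (f : Hom a b) (g : Hom b c) (h : Hom c d),
      ccomp h (ccomp g f) = ccomp (ccomp h g) f
}.
Arguments cid {C} a : rename.
Arguments ccomp {C a b c} : rename.

(* [q] = {0 < ... < q} as a poset category, with objects 'I_q.+1.
   A functor [q] -> C (= a q-simplex of NC). *)
Record functor (C : category) (q : nat) := Functor {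
  fob : 'I_q.+1 -> Ob C;
  far : forall i j : 'I_q.+1, (i <= j)%N -> Hom (fob i) (fob j);
  far_id : forall (i : 'I_q.+1) (h : (i <= i)%N), far h = cid (fob i);
  far_comp : forall (i j k : 'I_q.+1) (hij : (i <= j)%N) (hjk : (j <= k)%N) (hik : (i <= k)%N),
      far hik = ccomp (far hjk) (far hij)
}.

Record ordmap (p q : nat) := Ordmap {
  omap :> 'I_p.+1 -> 'I_q.+1;
  omono : forall i j : 'I_p.+1, (i <= j)%N -> (omap i <= omap j)%N
}.

Definition ordmap_id (p : nat) : ordmap p p :=
  @Ordmap p p (fun i => i) (fun i j h => h).

Definition ordmap_comp p q r (g : ordmap q r) (f : ordmap p q) : ordmap p r :=
  @Ordmap p r (fun i => g (f i)) (fun i j h => omono g (omono f h)).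

Definition fcomp (C : category) p q (Y : functor C q) (xi : ordmap p q) : functor C p :=
  @Functor C p (fun i => fob Y (xi i))
    (fun i j h => far Y (omono xi h))
    (fun i h => far_id Y (omono xi h))
    (fun i j k hij hjk hik => far_comp Y (omono xi hij) (omono xi hjk) (omono xi hik)).

Lemma fcomp_id (C : category) q (X : functor C q) : fcomp X (ordmap_id q) = X.
Proof. by case: X. Qed.

Lemma fcomp_comp (C : category) p q r (Z : functor C r) (g : ordmap q r) (f : ordmap p q) :
  fcomp (fcomp Z g) f = fcomp Z (ordmap_comp g f).
Proof. by []. Qed.

(* Objects of Delta/C: simplices of NC of all dimensions. *)
Record simplex (C : category) := Simplex { sdim : nat; sfun : functor C sdim }.

(* Morphisms X -> Y of Delta/C: order-preserving xi with Y o xi = X. *)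
Record dmor (C : category) (X Y : simplex C) := DMor {
  dmap : ordmap (sdim X) (sdim Y);
  dmapP : fcomp (sfun Y) dmap = sfun X
}.

Definition dmor_id (C : category) (X : simplex C) : dmor X X :=
  @DMor C X X (ordmap_id (sdim X)) (fcomp_id (sfun X)).

Definition dmor_comp (C : category) (X Y Z : simplex C) (g : dmor Y Z) (f : dmor X Y) :
  dmor X Z.
Proof.
refine (@DMor C X Z (ordmap_comp (dmap g) (dmap f)) _).
by rewrite -fcomp_comp (dmapP g) (dmapP f).
Defined.

Definition simplex_comp (C : category) (X : simplex C) (s : ordmap (sdim X).+1 (sdim X)) :
  simplex C := @Simplex C (sdim X).+1 (fcomp (sfun X) s).

Inductive elementary (C : category) :
  forall X Y : simplex C, dmor X Y -> dmor X Y -> Prop :=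
| Elementary (X : simplex C) (s : ordmap (sdim X).+1 (sdim X))
    (s_surj : forall j, exists i, s i = j)
    (d d' : ordmap (sdim X) (sdim X).+1)
    (hd : forall i, s (d i) = i) (hd' : forall i, s (d' i) = i)
    (e : fcomp (sfun (simplex_comp s)) d = sfun X)
    (e' : fcomp (sfun (simplex_comp s)) d' = sfun X) :
    @elementary C X (simplex_comp s) (DMor e) (DMor e').

Inductive dsim (C : category) : forall X Y : simplex C, dmor X Y -> dmor X Y -> Prop :=
| dsim_elem X Y (f g : dmor X Y) : elementary f g -> dsim f g
| dsim_refl X Y (f : dmor X Y) : dsim f f
| dsim_sym X Y (f g : dmor X Y) : dsim f g -> dsim g f
| dsim_trans X Y (f g h : dmor X Y) : dsim f g -> dsim g h -> dsim f h
| dsim_comp X Y Z (f f' : dmor X Y) (g g' : dmor Y Z) :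
    dsim f f' -> dsim g g' -> dsim (dmor_comp g f) (dmor_comp g' f').

(* [f] is an isomorphism in the quotient category [Delta/C]: there is a morphism
   g : Y -> X whose class is a two-sided inverse of the class of f
   (composition and identities in [Delta/C] are induced from Delta/C). *)
Definition quot_iso (C : category) (X Y : simplex C) (f : dmor X Y) : Prop :=
  exists g : dmor Y X,
    dsim (dmor_comp g f) (dmor_id X) /\ dsim (dmor_comp f g) (dmor_id Y).

From mathcomp Require Import all_boot zify.
From Stdlib Require Import FunctionalExtensionality ProofIrrelevance.
Set Implicit Arguments. Unset Strict Implicit. Unset Printing Implicit Defensive.

(* Let s be the least section of xi.  Then xi s = id, while f = s xi is a deflation
   (f i <= i) of [q_X] preserving the fibres of xi, so it remains to show that every such
   deflation is ~ id.  Induct on the defect sum_i (i - f i): let j be the largest point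
   moved by f and c = f j; raising f at j to c + 1 gives a deflation of smaller defect,
   and f is that deflation followed by the contraction sending c + 1 to c.  The
   contraction is ~ id because it equals codegen c \o coface (c+2), the identity equals
   codegen c \o coface (c+1), and coface (c+1), coface (c+2) are the two sections of
   codegen (c+1). *)

Lemma ordmap_ext p q (f g : ordmap p q) : (forall i, f i = g i :> nat) -> f = g.
Proof.
case: f g => f f_mono [g g_mono] /= efg.
have {}efg : f = g.
  by apply: functional_extensionality => i; apply: ord_inj; exact: efg.
by subst g; rewrite (proof_irrelevance _ f_mono g_mono).
Qed.

Lemma dmor_ext (C : category) (X Y : simplex C) (f g : dmor X Y) :
  dmap f = dmap g -> f = g.
Proof. by case: f g => f fP [g gP] /= efg; subst g; rewrite (proof_irrelevance _ fP gP). Qed.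

Lemma mono_ordmap p q (f : 'I_p.+1 -> nat) :
  (forall i, f i <= q) -> (forall i j : 'I_p.+1, i <= j -> f i <= f j) ->
  {g : ordmap p q | forall i, g i = f i :> nat}.
Proof.
move=> f_le f_mono.
have g_mono (i j : 'I_p.+1) : i <= j -> @inord q (f i) <= @inord q (f j).
  by move=> le_ij; rewrite !inordK ?ltnS // f_mono.
by exists (Ordmap g_mono) => i; rewrite /= inordK ?ltnS.
Qed.
Arguments mono_ordmap {p q} f.

Lemma omono_squeeze p q (f : ordmap p q) (i k j : 'I_p.+1) :
  i <= k <= j -> f i = f j -> f k = f j.
Proof.
case/andP => le_ik le_kj fij; apply/ord_inj/eqP.
by rewrite eqn_leq omono //= -fij omono.
Qed.

Definition codegen k i := if i <= k then i else i.-1.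
Definition coface k i := if i < k then i else i.+1.
Definition contract k i := if i == k.+1 then k else i.

Ltac nat_cases :=
  rewrite ?/codegen ?/coface ?/contract; repeat case: ifP => /=; move=> *; lia.

Lemma codegen_mono k : {homo codegen k : i j / i <= j}. Proof. move=> i j; nat_cases. Qed.
Lemma coface_mono k : {homo coface k : i j / i <= j}. Proof. move=> i j; nat_cases. Qed.
Lemma contract_mono k : {homo contract k : i j / i <= j}. Proof. move=> i j; nat_cases. Qed.

Lemma codegen_le k p i : k <= p -> i <= p.+1 -> codegen k i <= p. Proof. nat_cases. Qed.
Lemma coface_le k p i : i <= p -> coface k i <= p.+1. Proof. nat_cases. Qed.
Lemma contract_le k p i : i <= p -> contract k i <= p. Proof. nat_cases. Qed.

Lemma codegen_coface k i : codegen k (coface k i) = i. Proof. nat_cases. Qed.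
Lemma codegen_coface_succ k i : codegen k (coface k.+1 i) = i. Proof. nat_cases. Qed.
Lemma codegen_coface_succ2 k i : codegen k (coface k.+2 i) = contract k i.
Proof. nat_cases. Qed.
Lemma contract_codegen k i : contract k (codegen k.+1 i) = contract k (codegen k i).
Proof. nat_cases. Qed.

Section Codegeneracy.
Variable C : category.

Lemma fcomp_section (X : simplex C) (t : ordmap (sdim X).+1 (sdim X))
    (a : ordmap (sdim X) (sdim X).+1) :
  (forall i, t (a i) = i) -> fcomp (sfun (simplex_comp t)) a = sfun X.
Proof.
move=> ta; rewrite /= fcomp_comp -[RHS]fcomp_id; congr fcomp.
by apply: ordmap_ext => i /=; rewrite ta.
Qed.

Lemma dsim_sections (X Z : simplex C) (t : ordmap (sdim X).+1 (sdim X))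
    (a b : ordmap (sdim X) (sdim X).+1)
    (ta : forall i, t (a i) = i) (tb : forall i, t (b i) = i)
    (g : dmor (simplex_comp t) Z) :
  dsim (dmor_comp g (DMor (fcomp_section ta))) (dmor_comp g (DMor (fcomp_section tb))).
Proof.
have t_surj j : exists i, t i = j by exists (a j).
by apply: dsim_comp; [apply: dsim_elem; apply: Elementary | apply: dsim_refl].
Qed.

Lemma dsim_contraction_id (X : simplex C) (h : dmor X X) k :
  k < sdim X -> (forall i, dmap h i = contract k i :> nat) -> dsim h (dmor_id X).
Proof.
move=> lt_k hE.
have [t tE] := mono_ordmap (fun i : 'I_(sdim X).+2 => codegen k.+1 i)
  (fun i => codegen_le lt_k (leq_ord i)) (fun i j => @codegen_mono k.+1 i j).
have [g gE] := mono_ordmap (fun i : 'I_(sdim X).+2 => codegen k i)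
  (fun i => codegen_le (ltnW lt_k) (leq_ord i)) (fun i j => @codegen_mono k i j).
have [a aE] := mono_ordmap (fun i : 'I_(sdim X).+1 => coface k.+2 i)
  (fun i => coface_le _ (leq_ord i)) (fun i j => @coface_mono _ i j).
have [b bE] := mono_ordmap (fun i : 'I_(sdim X).+1 => coface k.+1 i)
  (fun i => coface_le _ (leq_ord i)) (fun i j => @coface_mono _ i j).
have ta i : t (a i) = i by apply: ord_inj; rewrite tE aE codegen_coface_succ.
have tb i : t (b i) = i by apply: ord_inj; rewrite tE bE codegen_coface.
have g_dmor : fcomp (sfun X) g = sfun (simplex_comp t).
  rewrite /= -(dmapP h) !fcomp_comp; congr fcomp.
  by apply: ordmap_ext => i; rewrite /= !hE gE tE contract_codegen.
pose gm := @DMor C (simplex_comp t) X g g_dmor.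
have := dsim_sections ta tb gm.
have -> : dmor_comp gm (DMor (fcomp_section ta)) = h.
  by apply/dmor_ext/ordmap_ext => i; rewrite /gm /= hE gE aE codegen_coface_succ2.
have -> // : dmor_comp gm (DMor (fcomp_section tb)) = dmor_id X.
by apply/dmor_ext/ordmap_ext => i; rewrite /gm /= gE bE codegen_coface_succ.
Qed.

End Codegeneracy.

Definition defect p (f : ordmap p p) := \sum_(i < p.+1) (i - f i).

Section Raise.
Variables (p : nat) (f : ordmap p p) (j : 'I_p.+1).
Hypotheses (moved_j : f j < j)
  (fixed_above : forall i : 'I_p.+1, j < i -> f i = i :> nat).

Definition raise_fun (i : 'I_p.+1) := if i == j then (f j).+1 else f i.

Lemma raise_ordmap : {g : ordmap p p | forall i, g i = raise_fun i :> nat}.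
Proof.
apply: mono_ordmap => [i | i k le_ik]; rewrite /raise_fun.
  by case: eqP => _; [exact: leq_trans moved_j (leq_ord j) | exact: leq_ord].
have := omono f le_ik; move: le_ik.
case: (eqVneq i j) => [-> | ne_ij]; case: (eqVneq k j) => [-> | ne_kj] // le_ik le_f.
- have lt_jk : j < k by rewrite ltn_neqAle eq_sym ne_kj le_ik.
  by have := fixed_above lt_jk; lia.
- exact: leqW.
Qed.

Lemma contract_raise i : contract (f j) (raise_fun i) = f i.
Proof.
rewrite /raise_fun /contract; case: (eqVneq i j) => [-> | ne_ij]; first by rewrite eqxx.
case: (ltngtP i j) => [lt_ij | lt_ji | /ord_inj eq_ij]; last by rewrite eq_ij eqxx in ne_ij.
  by have := omono f (ltnW lt_ij); case: eqP => // ? ?; lia.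
by have := fixed_above lt_ji; case: eqP => // ? ?; lia.
Qed.

Lemma defect_raise (g : ordmap p p) :
  (forall i, g i = raise_fun i :> nat) -> defect g < defect f.
Proof.
move=> gE; rewrite /defect (bigD1 j) //= [X in _ < X](bigD1 j) //=.
rewrite gE /raise_fun eqxx.
rewrite (eq_bigr (fun i : 'I_p.+1 => i - f i)) => [|i ne_ij].
  by move: moved_j; lia.
by rewrite gE /raise_fun (negbTE ne_ij).
Qed.

End Raise.

Section Deflation.
Variables (C : category) (X Y : simplex C) (xi : dmor X Y).

Definition fibrewise (f : ordmap (sdim X) (sdim X)) :=
  forall i, dmap xi (f i) = dmap xi i.

Lemma fcomp_fibrewise f : fibrewise f -> fcomp (sfun X) f = sfun X.
Proof.
move=> xi_f; rewrite -(dmapP xi) fcomp_comp; congr fcomp.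
by apply: ordmap_ext => i /=; rewrite xi_f.
Qed.

(* Both factors of f = contract c \o raise stay inside the fibres of xi because xi is
   constant on [c, j]. *)
Lemma dsim_deflation_id (f : dmor X X) :
  fibrewise (dmap f) -> (forall i, dmap f i <= i) -> dsim f (dmor_id X).
Proof.
have [n] := ubnP (defect (dmap f)); elim: n f => // n IHn f lt_defect xi_f f_le.
case: (pickP (fun i => dmap f i < i)) => [i0 moved_i0 | fixed] /=; last first.
  suff -> : f = dmor_id X by exact: dsim_refl.
  apply/dmor_ext/ordmap_ext => i /=; apply/eqP; rewrite eqn_leq f_le.
  by have /negbT := fixed i; rewrite -leqNgt.
have [j moved_j j_max] :=
  @arg_maxnP _ i0 (fun i => dmap f i < i) (fun i => i) moved_i0.
have fixed_above (i : 'I_(sdim X).+1) : j < i -> dmap f i = i :> nat.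
  move=> lt_ji; apply/eqP; rewrite eqn_leq f_le leqNgt; apply/negP => moved_i.
  by have := j_max i moved_i; rewrite /= leqNgt lt_ji.
set c := dmap f j.
have xi_between (u : 'I_(sdim X).+1) : c <= u <= j -> dmap xi u = dmap xi j.
  by move=> cuj; apply: omono_squeeze cuj (xi_f j).
have [g gE] := raise_ordmap moved_j fixed_above.
have lt_c : c < sdim X by apply: leq_trans moved_j (leq_ord j).
have [h hE] := mono_ordmap (fun i : 'I_(sdim X).+1 => contract c i)
  (fun i => contract_le c (leq_ord i)) (fun i k => @contract_mono c i k).
have xi_g : fibrewise g.
  move=> i; case: (eqVneq i j) => [-> | ne_ij].
    by apply: xi_between; rewrite (gE j) /raise_fun eqxx leqnSn moved_j.
  rewrite -(xi_f i); congr (dmap xi _).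
  by apply: ord_inj; rewrite gE /raise_fun (negbTE ne_ij).
have xi_h : fibrewise h.
  move=> i; case: (eqVneq (i : nat) c.+1) => [ic | nic]; last first.
    by congr (dmap xi _); apply: ord_inj; rewrite hE /contract (negbTE nic).
  have hi : h i = c :> nat by rewrite hE /contract ic eqxx.
  by rewrite !xi_between // ?hi ?ic ?leqnn ?leqnSn ?moved_j ?(ltnW moved_j).
have -> : f = dmor_comp (DMor (fcomp_fibrewise xi_h)) (DMor (fcomp_fibrewise xi_g)).
  by apply/dmor_ext/ordmap_ext => i /=; rewrite hE gE contract_raise.
have -> : dmor_id X = dmor_comp (dmor_id X) (dmor_id X) by apply/dmor_ext/ordmap_ext.
apply: dsim_comp; last by apply: (dsim_contraction_id lt_c); exact: hE.
apply: IHn => // [|i]; first by have := defect_raise moved_j gE; rewrite /=; lia.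
rewrite gE /raise_fun; case: eqP => [-> | _] //; exact: f_le.
Qed.

End Deflation.

Lemma least_section p q (f : ordmap p q) : (forall j, exists i, f i = j) ->
  exists2 s : ordmap q p, (forall j, f (s j) = j) & (forall i, s (f i) <= i).
Proof.
move=> f_surj.
have ex_preim j : exists n, (n < p.+1) && (f (inord n) == j).
  by have [i <-] := f_surj j; exists i; rewrite ltn_ord inord_val eqxx.
pose m j := ex_minn (ex_preim j).
have m_lt j : m j < p.+1 by rewrite /m; case: ex_minnP => n /andP[].
have m_preim j : f (inord (m j)) = j by rewrite /m; case: ex_minnP => n /andP[_ /eqP].
have m_min j (i : 'I_p.+1) : f i = j -> m j <= i.
  rewrite /m; case: ex_minnP => n _ n_min fi.
  by apply: n_min; rewrite ltn_ord inord_val fi eqxx.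
have m_mono (j j' : 'I_q.+1) : j <= j' -> m j <= m j'.
  move=> le_jj'; rewrite leqNgt; apply/negP => lt_m.
  have le_m : @inord p (m j') <= @inord p (m j) by rewrite !inordK ?m_lt // ltnW.
  have := omono f le_m; rewrite !m_preim => le_j'j.
  have ejj : j = j' by apply/ord_inj/eqP; rewrite eqn_leq le_jj'.
  by move: lt_m; rewrite ejj ltnn.
have [s sE] := mono_ordmap m m_lt m_mono.
exists s => [j | i]; last by rewrite sE; exact: m_min.
suff -> : s j = inord (m j) by exact: m_preim.
by apply: ord_inj; rewrite sE inordK.
Qed.

Theorem lemma17 (C : category) (X Y : simplex C) (xi : dmor X Y) :
  (forall j : 'I_(sdim Y).+1, exists i : 'I_(sdim X).+1, dmap xi i = j) ->
  quot_iso xi.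
Proof.
move=> xi_surj; have [s xi_s s_xi] := least_section xi_surj.
have s_dmor : fcomp (sfun X) s = sfun Y.
  rewrite -(dmapP xi) fcomp_comp -[RHS]fcomp_id; congr fcomp.
  by apply: ordmap_ext => j /=; rewrite xi_s.
exists (DMor s_dmor); split.
  by apply: (@dsim_deflation_id _ _ _ xi) => i /=; rewrite ?xi_s ?s_xi.
suff -> : dmor_comp xi (DMor s_dmor) = dmor_id Y by exact: dsim_refl.
by apply/dmor_ext/ordmap_ext => j /=; rewrite xi_s.
Qed.
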